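(* For every integer $k\geq 3$, every extremal square-free word over an alphabet with exactly $k$ letters has length greater than $\left(\frac{5}{4}\right)^{k/4}$.
   Context: A word is a finite sequence of letters. A factor of $W$ is a word $U$ with $W=W_1UW_2$ for some (possibly empty) words $W_1,W_2$. A square is a nonempty word of the form $XX$; a word is square-free if none of its factors is a square. An extension of a word $W$ over an alphabet $\mathbb{A}$ is any word $W_1xW_2$ where $W=W_1W_2$ ($W_1,W_2$ possibly empty) and $x\in\mathbb{A}$. A word $W$ over $\mathbb{A}$ is extremal square-free if $W$ is square-free and every extension of $W$ (over $\mathbb{A}$) contains a square as a factor. *)

From mathcomp Require Import all_boot.
From Stdlib Require Import Reals.

Set Implicit Arguments.
Unset Strict Implicit.
Unset Printing Implicit Defensive.

Definition is_factor (T : Type) (U W : seq T) : Prop :=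
  exists W1 W2 : seq T, W = W1 ++ U ++ W2.

Definition is_square (T : Type) (U : seq T) : Prop :=
  exists X : seq T, X <> [::] /\ U = X ++ X.

Definition square_free (T : Type) (W : seq T) : Prop :=
  forall U : seq T, is_factor U W -> ~ is_square U.

Definition is_extension (T : Type) (V W : seq T) : Prop :=
  exists (W1 W2 : seq T) (x : T), W = W1 ++ W2 /\ V = W1 ++ x :: W2.

Definition extremal_square_free (T : Type) (W : seq T) : Prop :=
  square_free W /\
  forall V : seq T, is_extension V W -> exists U : seq T, is_factor U V /\ is_square U.

(** Inserting a letter x at the front of an extremal square-free word W must create a
    square, and since W is square-free that square is a prefix x B x B of x W.  So every
    letter x yields a length p = |B| + 1 with W = B x B ..., and distinct letters yield
    distinct p.  Two such lengths p < q satisfy 3p <= 2q, for otherwise W would contain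
    a square of half-length q - p starting at position p.  Hence the k letters give
    lengths growing geometrically with ratio 3/2, and |W| >= (3/2)^(k-1) > (5/4)^(k/4). *)

From mathcomp Require Import all_boot zify.
From Stdlib Require Import Reals Lra.
(* Reals rebinds the nat arithmetic notations to Stdlib's; restore ssrnat's. *)
Import ssrnat.

Set Implicit Arguments.
Unset Strict Implicit.
Unset Printing Implicit Defensive.

Section Squares.
Variables (T : Type) (x0 : T).

Lemma repeated_window_not_square_free (W : seq T) (s d : nat) :
  0 < d -> s + d + d <= size W ->
  (forall t, t < d -> nth x0 W (s + t) = nth x0 W (s + d + t)) ->
  ~ square_free W.
Proof.
move=> d_gt0 sdW repeat sfW.
set X := take d (drop s W).
have size_X : size X = d by rewrite size_takel // size_drop; lia.
have X_repeats : take d (drop d (drop s W)) = X.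
  apply: (eq_from_nth (x0 := x0)) => [|i]; first by rewrite size_X size_takel // !size_drop; lia.
  rewrite size_takel ?size_drop => [lt_i|]; last lia.
  by rewrite !nth_take // !nth_drop addnA repeat.
apply: (sfW (X ++ X)).
  exists (take s W), (drop (d + d) (drop s W)).
  by rewrite -{2}X_repeats /X -takeD !cat_take_drop.
exists X; split=> // X0.
by move: d_gt0; rewrite -size_X X0.
Qed.

Lemma square_free_cons_square (W U : seq T) (x : T) :
  square_free W -> is_factor U (x :: W) -> is_square U ->
  exists2 X, X <> [::] & exists V, x :: W = X ++ X ++ V.
Proof.
move=> sfW [W1 [W2 xW]] [X [X_nil U_XX]].
case: W1 xW => [|y W1] xW.
  by exists X => //; exists W2; rewrite xW U_XX -catA.
case: (sfW U); last by exists X.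
by exists W1, W2; case: xW.
Qed.

End Squares.

Lemma path_geometric (b c a : nat) (s : seq nat) :
  path (fun p q => c * p <= b * q) a s -> c ^ size s * a <= b ^ size s * last a s.
Proof.
elim: s a => [|a' s IHs] a; first by rewrite !mul1n.
move=> /= /andP[ca_le_ba' /IHs IH].
rewrite !expnS -mulnA mulnCA -[X in _ <= X]mulnA.
apply: leq_trans (leq_mul (leqnn b) IH).
by rewrite [leqRHS]mulnCA leq_mul2l ca_le_ba' orbT.
Qed.

Section InsertionPeriods.
Variables (T : eqType) (W : seq T).

(* [p] is an insertion period when W = B y B ... with |B| = p - 1 (and y = W[p-1]),
   i.e. when prefixing W with y creates the square (y B)(y B). *)
Definition insertion_period (p : nat) : bool :=
  [&& 0 < p, p + p <= (size W).+1 & take p.-1 W == take p.-1 (drop p W)].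

Lemma insertion_period_le_size (p : nat) : insertion_period p -> p <= size W.
Proof. by case/and3P=> _ pW _; lia. Qed.

Lemma insertion_period_nth (x0 : T) (p j : nat) :
  insertion_period p -> j < p.-1 -> nth x0 W (p + j) = nth x0 W j.
Proof.
by move=> /and3P[_ _ /eqP eq_B] lt_j; rewrite -(nth_take x0 lt_j) eq_B nth_take // nth_drop.
Qed.

Lemma insertion_period_gap (p q : nat) :
  square_free W -> insertion_period p -> insertion_period q -> p < q -> 3 * p <= 2 * q.
Proof.
move=> sfW per_p per_q lt_pq; rewrite leqNgt; apply/negP => gap_small.
have /and3P[p_gt0 _ _] := per_p; have /and3P[_ qW _] := per_q.
have [x0 _] : exists x0 : T, true by case: (W) qW => [|x0 w] /=; [lia | exists x0].
apply: (repeated_window_not_square_free (x0 := x0) (W := W) (s := p) (d := q - p)) => //; try lia.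
move=> t lt_t.
rewrite insertion_period_nth //; last by lia.
have -> : p + (q - p) + t = q + t by lia.
by rewrite insertion_period_nth //; lia.
Qed.

Definition insertion_periods : seq nat := [seq p <- iota 1 (size W) | insertion_period p].

Lemma insertion_periods_path (a : nat) (s : seq nat) :
  square_free W -> insertion_periods = a :: s ->
  path (fun p q => 3 * p <= 2 * q) a s.
Proof.
move=> sfW periods_as.
have sorted_as : sorted ltn (a :: s).
  by rewrite -periods_as sorted_filter ?iota_ltn_sorted //; exact: ltn_trans.
apply: (@sub_in_path _ insertion_period ltn) sorted_as.
  by move=> p q per_p per_q; apply: insertion_period_gap.
by rewrite -periods_as filter_all.
Qed.

End InsertionPeriods.

Section ExtremalWords.
Variables (T : finType) (W : seq T).
Hypothesis extW : extremal_square_free W.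

Lemma extremal_insertion_period (x0 x : T) :
  exists2 p, insertion_period W p & nth x0 W p.-1 = x.
Proof.
have [sfW ext] := extW.
have [U [factor_U square_U]] : exists U, is_factor U (x :: W) /\ is_square U.
  by apply: ext; exists [::], W, x.
have [[//|y B] _ [V]] := square_free_cons_square sfW factor_U square_U.
case=> <- ->; exists (size B).+1; last by rewrite nth_cat ltnn subnn.
apply/and3P; split=> //; first by rewrite size_cat /= size_cat; lia.
have size_B : size B = size B by [].
by rewrite /= -add1n -drop_drop (drop_size_cat _ size_B) /= drop0 !(take_size_cat _ size_B).
Qed.

Lemma card_le_size_insertion_periods : #|T| <= size (insertion_periods W).
Proof.
have [-> // | /card_gt0P[x0 _]] := posnP #|T|.
rewrite -(size_map (fun p => nth x0 W p.-1)); apply: leq_trans (card_size _).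
apply/subset_leq_card/subsetP => x _.
have [p per_p <-] := extremal_insertion_period x0 x.
apply: map_f; rewrite mem_filter per_p mem_iota.
have /and3P[p_gt0 _ _] := per_p.
by rewrite add1n ltnS p_gt0 insertion_period_le_size.
Qed.

Lemma extremal_size_geometric :
  0 < #|T| -> exists2 m, #|T| <= m.+1 & 3 ^ m <= 2 ^ m * size W.
Proof.
move=> T_gt0; have := card_le_size_insertion_periods.
case periods_as: (insertion_periods W) => [|a s] /= card_le.
  by have := leq_trans T_gt0 card_le.
exists (size s) => //.
have /path_geometric := insertion_periods_path extW.1 periods_as.
have /allP per_all : all (insertion_period W) (a :: s).
  by rewrite -periods_as filter_all.
have /per_all/and3P[a_gt0 _ _] : a \in a :: s by rewrite mem_head.
have /per_all/insertion_period_le_size last_le := mem_last a s.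
move=> geometric; apply: leq_trans (leq_pmulr _ a_gt0) (leq_trans geometric _).
by rewrite leq_mul2l last_le orbT.
Qed.

End ExtremalWords.

Lemma INR_expn (b m : nat) : INR (b ^ m) = (INR b ^ m)%R.
Proof. by elim: m => [|m IHm] //=; rewrite expnS -multE mult_INR IHm. Qed.

Lemma five_fourths_power_lt (k m n : nat) :
  3 <= k -> k <= m.+1 -> 3 ^ m <= 2 ^ m * n ->
  (Rpower (5 / 4) (INR k / 4) < INR n)%R.
Proof.
move=> /leP k_ge3 /leP k_le_m /leP /le_INR geometric.
rewrite -multE mult_INR !INR_expn (INR_IZR_INZ 3) (INR_IZR_INZ 2) in geometric.
have ratio : ((3 / 2) ^ m * 2 ^ m = 3 ^ m)%R.
  by rewrite -Rpow_mult_distr; f_equal; lra.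
have le_32 : ((3 / 2) ^ m <= INR n)%R.
  apply: (Rmult_le_reg_r (2 ^ m)); first by apply: pow_lt; lra.
  by rewrite ratio Rmult_comm.
have k4_lt_m : (INR k / 4 < INR m)%R.
  have k_le_mR : (INR k <= INR m + 1)%R by rewrite -S_INR; apply: le_INR.
  have k_ge3R : (INR 3 <= INR k)%R := le_INR _ _ k_ge3.
  by move: k_ge3R => /=; lra.
apply: (Rlt_le_trans _ (Rpower (5 / 4) (INR m))); first by apply: Rpower_lt; lra.
rewrite Rpower_pow; last lra.
apply: Rle_trans le_32; apply: pow_incr; lra.
Qed.

Theorem mainTheorem2 (k : nat) (T : finType) (W : seq T) :
  3 <= k -> #|T| = k -> extremal_square_free W ->
  (Rpower (5 / 4) (INR k / 4) < INR (size W))%R.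
Proof.
move=> k_ge3 card_T extW.
have [m card_le geometric] : exists2 m, #|T| <= m.+1 & 3 ^ m <= 2 ^ m * size W.
  by apply: extremal_size_geometric extW _; rewrite card_T; lia.
by apply: five_fourths_power_lt geometric => //; rewrite -card_T.
Qed.
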